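(* Let $\vec d=(\vec a,\vec b)$ be a bidegree sequence of length $n$ with $\sum_i a_i=\sum_i b_i=n\bar c$, with the entries of $\vec a$ in non-increasing order, $m:=\min\vec d$ satisfying $1\le m\le n$, and $\max\vec d\le n$. Suppose there exist an integer $R\in[0..n]$ and a real $\lambda\ge0$ such that $\sum_{i=1}^R a_i=n\lambda$, $\sum_{i=1}^R b_i\le n\lambda$, $\lambda<m$ and $n-n\lambda/m-R\ge1$. Let $M=\max_{i\ge R}\max(a_i,b_i)$ and $k_*=m+\sqrt{m^2+n(\bar c-2m)+Rm}$; let $k=\lceil k_*\rceil$ if $m^2+n(\bar c-2m)+Rm\ge0$ and $k=1$ otherwise. If $$M\le\min\Big(\Big\lfloor\frac{n\bar c-nm-n\lambda+Rm}{k}+m\Big\rfloor,\ n\Big)$$ and either $k\le M$ or $k\le n-n\lambda/m-R$, then $\vec d$ is graphic with loops.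
   Context: A bidegree sequence of length $n$ is a pair $\vec d=(\vec a,\vec b)$ with $\vec a=(a_1,\dots,a_n)\in\mathbb{N}_0^n$ and $\vec b=(b_1,\dots,b_n)\in\mathbb{N}_0^n$. It is graphic with loops if there is an $n\times n$ matrix with entries in $\{0,1\}$ whose $i$th row sum is $a_i$ and whose $i$th column sum is $b_i$ for every $i\in[1..n]$. $\max\vec d$ and $\min\vec d$ denote the maximum and minimum over all $2n$ entries $a_1,\dots,a_n,b_1,\dots,b_n$. The number $\bar c$ (the average degree) is defined by $\sum_i a_i=\sum_i b_i=n\bar c$. For integers $a\le b$, $[a..b]:=\{x\in\mathbb{Z}:a\le x\le b\}$. *)

From Stdlib Require Import Reals ZArith.
From mathcomp Require Import all_boot.

Set Implicit Arguments.
Unset Strict Implicit.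
Unset Printing Implicit Defensive.

(* Vectors a, b indexed by 'I_n (paper index i in [1..n] is ordinal i-1). *)

Definition graphic_with_loops (n : nat) (a b : 'I_n -> nat) : Prop :=
  exists A : 'I_n -> 'I_n -> bool,
    (forall i : 'I_n, \sum_(j < n) nat_of_bool (A i j) = a i) /\
    (forall j : 'I_n, \sum_(i < n) nat_of_bool (A i j) = b j).

Definition dmax (n : nat) (a b : 'I_n -> nat) : nat :=
  \max_(i < n) maxn (a i) (b i).

(* min over all 2n entries (the neutral element dmax makes this the true
   minimum whenever n > 0) *)
Definition dmin (n : nat) (a b : 'I_n -> nat) : nat :=
  \big[minn/dmax a b]_(i < n) minn (a i) (b i).

From Stdlib Require Import Reals ZArith.
From mathcomp Require Import all_boot.
From Stdlib Require Import Lia Psatz.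
From mathcomp Require Import zify.

(* By the Gale-Ryser theorem, in the form given by Ryser's greedy construction,
   it suffices that for every threshold t the column excess sum_j (b_j - t)_+
   is at most the row tail sum_(i >= t) a_i.  Write S = n cbar and
   N = n lambda.  For t <= m the excess is exactly S - n t, and for
   m < t <= R the first R rows are controlled by N.  For t >= M the columns
   j >= R contribute nothing.  In the remaining range R < t < M every column
   excess lies below the chord of x |-> (x - t)_+, on [0, n] for the first R
   columns and on [m, M] for the others; the resulting bound is affine in t,
   and it is compared with the tail bound (n - t) m for t >= k and with
   S - N - (t - R) M for t < k, which is exactly where the discriminant and
   the floor defining k enter. *)

Set Implicit Arguments.
Unset Strict Implicit.
Unset Printing Implicit Defensive.

Lemma sum_mem_card (T : finType) (C : {set T}) : \sum_j (j \in C : nat) = #|C|.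
Proof. by rewrite -sum1_card [RHS]big_mkcond; apply: eq_bigr => j _; case: (j \in C). Qed.

Lemma exists_top_subset (T : finType) (w : T -> nat) r : r <= #|T| ->
  exists C : {set T}, #|C| = r /\ forall x y, x \in C -> y \notin C -> w y <= w x.
Proof.
elim: r => [|r IH] lt_r.
  by exists set0; split=> [|x y]; rewrite ?cards0 ?inE.
have [C [cardC topC]] := IH (ltnW lt_r).
have /card_gt0P[y0] : 0 < #|~: C| by move: (cardsC C); rewrite cardC; lia.
rewrite inE => y0C.
have [y yC ymax] := @arg_maxnP T y0 (fun y => y \notin C) w y0C.
exists (y |: C); split; first by rewrite cardsU1 yC cardC.
move=> x z; rewrite !inE negb_or => /orP[/eqP-> | xC] /andP[_ zC]; first exact: ymax.
exact: topC.
Qed.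

Lemma top_subset_support (T : finType) (w : T -> nat) (C : {set T}) :
  (forall x y, x \in C -> y \notin C -> w y <= w x) ->
  #|C| <= #|[set j | 0 < w j]| -> forall x, x \in C -> 0 < w x.
Proof.
move=> topC le_C x xC; rewrite lt0n; apply/negP=> /eqP wx0.
have : [set j | 0 < w j] \subset C :\ x.
  apply/subsetP=> y; rewrite !inE => wy_gt0; apply/andP; split.
    by apply: contraTneq wy_gt0 => ->; rewrite wx0.
  by apply: contraTT wy_gt0 => yC; have := topC x y xC yC; rewrite wx0 leqn0 => /eqP->.
move/subset_leq_card; move: le_C (cardsD1 x C); rewrite xC; lia.
Qed.

(* Truncated subtraction makes [b j - t] the positive part; when the totals
   agree this is the usual [sum_(i < t) f i <= sum_j minn (b j) t]. *)
Definition gale_ryser_cond (q : nat) (f : nat -> nat) (p : nat) (b : 'I_q -> nat) :=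
  forall t, t <= p -> \sum_j (b j - t) <= \sum_(t <= i < p) f i.

Section GaleRyser.

Variables (q : nat) (f : nat -> nat).
Hypothesis f_noninc : forall i j, i <= j -> f j <= f i.

Lemma gale_ryser_cond_le p (b : 'I_q -> nat) : gale_ryser_cond f p b -> forall j, b j <= p.
Proof.
move=> /(_ p (leqnn p)); rewrite big_geq // leqn0 sum_nat_eq0 => /forallP bp j.
by rewrite -subn_eq0; exact: (implyP (bp j)).
Qed.

Lemma last_row_le_support p (b : 'I_q -> nat) :
  \sum_(i < p.+1) f i = \sum_j b j -> gale_ryser_cond f p.+1 b ->
  f p <= #|[set j | 0 < b j]|.
Proof.
move=> sum_fb /(_ 1 isT) cond1.
have : \sum_j b j = \sum_j (b j - 1) + #|[set j | 0 < b j]|.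
  rewrite -sum_mem_card -big_split; apply: eq_bigr => j _; rewrite inE.
  by case: (b j) => // k; rewrite ltn0Sn /= subn1 addn1.
have : \sum_(i < p.+1) f i = f 0 + \sum_(1 <= i < p.+1) f i.
  by rewrite -(big_mkord xpredT) (big_ltn (ltn0Sn p)).
have := f_noninc (leq0n p); lia.
Qed.

Section RemoveLastRow.

Variables (p : nat) (b : 'I_q -> nat) (C : {set 'I_q}).
Hypotheses (cond_b : gale_ryser_cond f p.+1 b) (cardC : #|C| = f p).
Hypothesis topC : forall x y, x \in C -> y \notin C -> b y <= b x.
Hypothesis C_support : forall x, x \in C -> 0 < b x.

Let b' j := b j - (j \in C).

Lemma sum_remove_last_row : \sum_j b j = \sum_j b' j + f p.
Proof.
rewrite -cardC -sum_mem_card -big_split; apply: eq_bigr => j _ /=.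
by rewrite /b'; case: (boolP (j \in C)) => [/C_support|] /= Hj; lia.
Qed.

Lemma gale_ryser_cond_remove_last_row : gale_ryser_cond f p b'.
Proof.
move=> t le_tp; have := cond_b (leqW le_tp); rewrite big_nat_recr ?(leq_trans le_tp) //=.
have [[x xC bx_le]|C_big] :
    (exists2 x, x \in C & b x <= t) \/ (forall x, x \in C -> t < b x).
  have [/existsP[x /andP[xC bx_le]]|/existsPn C_big] :=
    boolP [exists x, (x \in C) && (b x <= t)]; first by left; exists x.
  by right=> x xC; move: (C_big x); rewrite xC ltnNge.
- (* Columns outside [C] lie below [b x <= t]; those in [C] below [p]. *)
  move=> _; apply: (@leq_trans (\sum_(j in C) (p - t))).
    rewrite (bigID (mem C)) /= [X in _ + X]big1 ?addn0; last first.
      move=> j jC; apply/eqP; rewrite /b' (negbTE jC) subn0 subn_eq0.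
      exact: leq_trans (topC xC jC) bx_le.
    apply: leq_sum => j jC; rewrite /b' jC.
    have := gale_ryser_cond_le cond_b j; lia.
  rewrite sum_nat_const cardC mulnC -sum_nat_const_nat big_nat_cond.
  rewrite [X in _ <= X]big_nat_cond; apply: leq_sum => i.
  by case/andP=> /andP[_ lt_ip] _; apply: f_noninc; apply: ltnW.
- have -> : \sum_j (b j - t) = \sum_j (b' j - t) + f p.
    rewrite -cardC -sum_mem_card -big_split; apply: eq_bigr => j _ /=.
    by rewrite /b'; case: (boolP (j \in C)) => [/C_big|] /= Hj; lia.
  by rewrite leq_add2r; apply.
Qed.

End RemoveLastRow.

(* Ryser's construction: the last (smallest) row is placed on the columns with
   the largest remaining sums. *)
Theorem gale_ryser p (b : 'I_q -> nat) :
  \sum_(i < p) f i = \sum_j b j -> gale_ryser_cond f p b ->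
  exists A : nat -> 'I_q -> bool,
    (forall i, i < p -> \sum_j (A i j : nat) = f i) /\
    (forall j, \sum_(i < p) (A i j : nat) = b j).
Proof.
elim: p b => [|p IH] b sum_fb cond_b.
  exists (fun _ _ => false); split=> // j; apply/esym/eqP.
  move: sum_fb; rewrite big_ord0 => /esym/eqP; rewrite sum_nat_eq0 big_ord0.
  by move=> /forallP/(_ j).
have le_fp := last_row_le_support sum_fb cond_b.
have [C [cardC topC]] := exists_top_subset b (leq_trans le_fp (max_card _)).
have C_support := top_subset_support topC (leq_trans (eq_leq cardC) le_fp).
have [A [rowA colA]] : exists A : nat -> 'I_q -> bool,
    (forall i, i < p -> \sum_j (A i j : nat) = f i) /\
    (forall j, \sum_(i < p) (A i j : nat) = b j - (j \in C)).
  apply: IH; last exact: gale_ryser_cond_remove_last_row.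
  move: sum_fb; rewrite big_ord_recr (sum_remove_last_row cardC C_support).
  by move=> /eqP; rewrite eqn_add2r => /eqP.
exists (fun i j => if i == p then j \in C else A i j); split.
  move=> i; rewrite ltnS leq_eqVlt => /orP[/eqP-> | lt_ip].
    by rewrite eqxx sum_mem_card.
  by rewrite (ltn_eqF lt_ip); exact: rowA.
move=> j; rewrite big_ord_recr /= eqxx.
under eq_bigr => i _ do rewrite (ltn_eqF (ltn_ord i)).
rewrite colA; case: (boolP (j \in C)) => [/C_support|] /= Hj; lia.
Qed.

End GaleRyser.

(* Rows are indexed by [nat] for the induction; padding with zeros beyond [n]
   keeps a non-increasing sequence non-increasing. *)
Definition zero_ext (n : nat) (a : 'I_n -> nat) (i : nat) : nat := oapp a 0 (insub i).

Lemma zero_ext_ord n (a : 'I_n -> nat) i (lt_in : i < n) : zero_ext a i = a (Ordinal lt_in).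
Proof. by rewrite /zero_ext insubT. Qed.

Lemma zero_extE n (a : 'I_n -> nat) (i : 'I_n) : zero_ext a i = a i.
Proof. by rewrite /zero_ext valK. Qed.

Lemma zero_ext_noninc n (a : 'I_n -> nat) :
  (forall i j : 'I_n, i <= j -> a j <= a i) ->
  forall i j, i <= j -> zero_ext a j <= zero_ext a i.
Proof.
move=> a_noninc i j le_ij.
have [lt_jn | le_nj] := ltnP j n; last by rewrite /zero_ext insubF // ltnNge le_nj.
have lt_in := leq_ltn_trans le_ij lt_jn.
by rewrite (zero_ext_ord a lt_in) (zero_ext_ord a lt_jn); apply: a_noninc.
Qed.

Lemma graphic_with_loops_of_gale_ryser n (a b : 'I_n -> nat) :
  (forall i j : 'I_n, i <= j -> a j <= a i) -> \sum_i a i = \sum_j b j ->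
  gale_ryser_cond (zero_ext a) n b -> graphic_with_loops a b.
Proof.
move=> a_noninc sum_ab cond.
have sum_f : \sum_(i < n) zero_ext a i = \sum_j b j.
  by rewrite -sum_ab; apply: eq_bigr => i _; rewrite zero_extE.
have [A [rowA colA]] := gale_ryser (zero_ext_noninc a_noninc) sum_f cond.
by exists (fun i j => A i j); split=> [i|j]; rewrite ?rowA ?zero_extE.
Qed.

Section ExcessArithmetic.
Local Open Scope Z_scope.

Lemma interpolate_nonneg (g : Z -> Z) (u v t : Z) :
  u <= t <= v -> (v - u) * g t = (v - t) * g u + (t - u) * g v ->
  0 <= g u -> 0 <= g v -> 0 <= g t.
Proof.
move=> [ut tv] interp gu gv.
have : 0 <= (v - t) * g u + (t - u) * g v by nia.
case: (Z.eq_dec u v) => [uv|uv]; first by have -> : t = u by lia.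
nia.
Qed.

Lemma mul3_ge0 (x y z : Z) : 0 <= x -> 0 <= y -> 0 <= z -> 0 <= x * y * z.
Proof. by move=> x_ge0 y_ge0 z_ge0; do 2![apply: Z.mul_nonneg_nonneg => //]. Qed.

Variables (n m M R N B S k t : Z).

(* Chord bounds: [n (M - m)] times the column excess at level [t] is at most [P t]. *)
Let P x := (M - m) * (n - x) * B + n * (M - x) * (S - B - (n - R) * m).
Let disc := m * m + S - 2 * n * m + R * m.

Lemma excess_bound_ge_k :
  0 < n -> 0 < m -> 0 <= B <= N -> N <= n * m -> m < t < M -> M <= n -> k <= t ->
  k * (M - m) + n * m + N <= S + R * m ->
  disc < 0 \/ m <= k /\ disc <= (k - m) * (k - m) ->
  P t <= n * (M - m) * (n - t) * m.
Proof.
move=> n_gt0 m_gt0 B_bounds le_Nnm [m_lt_t t_lt_M] le_Mn le_kt k_floor k_disc.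
(* [g] is affine, so its sign at [t] follows from its sign at two points around [t]. *)
pose g x := n * (M - m) * (n - x) * m - P x.
suff : 0 <= g t by rewrite /g; lia.
have gM : 0 <= g M.
  have -> : g M = (M - m) * (n - M) * (n * m - B) by rewrite /g /P; ring.
  by apply: mul3_ge0; lia.
case: k_disc => [disc_lt0 | [le_mk k_disc]].
- apply: (@interpolate_nonneg g m M) => //; try lia; first by rewrite /g /P; ring.
  have -> : g m = (M - m) * (n * ((n - m) * m - (S - (n - R) * m)) + m * B).
    by rewrite /g /P; ring.
  apply: Z.mul_nonneg_nonneg; first lia.
  rewrite /disc in disc_lt0; nia.
- apply: (@interpolate_nonneg g k M) => //; try lia; first by rewrite /g /P; ring.
  have S_le : S - (n - R) * m <= (n - k) * m + k * (k - m) by rewrite /disc in k_disc; lia.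
  have N_le : N + k * (M - k) <= (n - k) * m by nia.
  have : n * (M - k) * (S - B - (n - R) * m) <= n * (M - k) * ((n - k) * m + k * (k - m) - B).
    by apply: Z.mul_le_mono_nonneg_l; nia.
  have : n * ((k - m) * N) <= n * ((k - m) * ((n - k) * m - k * (M - k))).
    by apply: Z.mul_le_mono_nonneg_l; [lia | apply: Z.mul_le_mono_nonneg_l; lia].
  have : 0 <= n * (k - m) * (N - B) by apply: mul3_ge0; lia.
  have : 0 <= B * k * (M - m) by apply: mul3_ge0; lia.
  rewrite /g /P; nia.
Qed.

Lemma excess_bound_lt_k :
  0 < n -> 0 < m -> 0 <= B <= N -> 0 <= R -> R < t -> m < t < M -> t < k ->
  k * (M - m) + n * m + N <= S + R * m ->
  disc <= (k - m) * (k - m) -> k <= M \/ m * k + N + m * R <= m * n ->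
  P t <= n * (M - m) * (S - N - (t - R) * M).
Proof.
move=> n_gt0 m_gt0 B_bounds R_ge0 lt_Rt [m_lt_t t_lt_M] lt_tk k_floor k_disc k_slack.
pose E := S - N - (n - R) * m.
have kE : k * (M - m) <= E by rewrite /E; lia.
have tail : 0 <= (n - R) * m - N - (t - R) * M + k * (t - m).
  case: (Z_le_gt_dec k M) => [le_kM | lt_Mk].
  - have N_le : N + k * (M - k) <= (n - k) * m by rewrite /disc in k_disc; nia.
    have : 0 <= (k - t) * (M - k) by apply: Z.mul_nonneg_nonneg; lia.
    have : 0 <= R * (M - m) by apply: Z.mul_nonneg_nonneg; lia.
    lia.
  - case: k_slack => [|k_slack]; first lia.
    have : 0 <= t * (k - M) by apply: Z.mul_nonneg_nonneg; lia.
    have : 0 <= R * M by apply: Z.mul_nonneg_nonneg; lia.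
    lia.
pose U := (M - m) * ((n - R) * m - N - (t - R) * M) + (t - m) * E.
have U_ge0 : 0 <= U.
  have : (t - m) * (k * (M - m)) <= (t - m) * E by apply: Z.mul_le_mono_nonneg_l; lia.
  have : 0 <= (M - m) * ((n - R) * m - N - (t - R) * M + k * (t - m)).
    by apply: Z.mul_nonneg_nonneg; lia.
  rewrite /U; lia.
have -> : n * (M - m) * (S - N - (t - R) * M) =
          P t + n * U + (M - m) * t * B + n * (t - m) * (N - B).
  by rewrite /P /U /E; ring.
have : 0 <= (M - m) * t * B by apply: mul3_ge0; lia.
have : 0 <= n * (t - m) * (N - B) by apply: mul3_ge0; lia.
have : 0 <= n * U by apply: Z.mul_nonneg_nonneg; lia.
lia.
Qed.

Lemma excess_le_tail_midZ (D1 D2 J T : Z) :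
  0 < n -> 0 < m -> 0 <= B <= N -> N <= n * m -> 0 <= R -> R < t -> m < t < M -> M <= n ->
  k * (M - m) + n * m + N <= S + R * m ->
  disc < 0 \/ m <= k /\ disc <= (k - m) * (k - m) ->
  k <= M \/ m * k + N + m * R <= m * n ->
  0 <= D1 -> 0 <= D2 -> J + B + n * m = S + R * m ->
  n * D1 + t * B <= n * B -> M * D2 + t * J <= m * D2 + M * J ->
  n * m <= T + t * m -> S + R * M <= N + t * M + T ->
  D1 + D2 <= T.
Proof.
move=> n_gt0 m_gt0 B_bounds le_Nnm R_ge0 lt_Rt t_bounds le_Mn k_floor k_disc k_slack.
move=> D1_ge0 D2_ge0 J_eq D1_le D2_le T_ge1 T_ge2.
have nMm_gt0 : 0 < n * (M - m) by apply: Z.mul_pos_pos; lia.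
have PD : n * (M - m) * (D1 + D2) <= P t.
  have : (M - m) * (n * D1) <= (M - m) * ((n - t) * B) by apply: Z.mul_le_mono_nonneg_l; lia.
  have : n * ((M - m) * D2) <= n * ((M - t) * J) by apply: Z.mul_le_mono_nonneg_l; lia.
  rewrite /P (_ : S - B - (n - R) * m = J); lia.
apply/(Z.mul_le_mono_pos_l _ _ _ nMm_gt0).
case: (Z.le_gt_cases k t) => [le_kt | lt_tk].
- have := excess_bound_ge_k n_gt0 m_gt0 B_bounds le_Nnm t_bounds le_Mn le_kt k_floor k_disc.
  have : n * (M - m) * ((n - t) * m) <= n * (M - m) * T.
    by apply: Z.mul_le_mono_nonneg_l; lia.
  lia.
- have k_disc' : disc <= (k - m) * (k - m) by case: k_disc; nia.
  have := excess_bound_lt_k n_gt0 m_gt0 B_bounds R_ge0 lt_Rt t_bounds lt_tk k_floor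
    k_disc' k_slack.
  have : n * (M - m) * (S - N - (t - R) * M) <= n * (M - m) * T.
    by apply: Z.mul_le_mono_nonneg_l; lia.
  lia.
Qed.

End ExcessArithmetic.

Lemma sum_nat_range_le (F : nat -> nat) s t c :
  (forall i, s <= i < t -> F i <= c) -> \sum_(s <= i < t) F i <= (t - s) * c.
Proof.
move=> le_Fc; rewrite -sum_nat_const_nat big_nat_cond [X in _ <= X]big_nat_cond.
by apply: leq_sum => i /andP[/le_Fc].
Qed.

Lemma sum_nat_range_ge (F : nat -> nat) s t c :
  (forall i, s <= i < t -> c <= F i) -> (t - s) * c <= \sum_(s <= i < t) F i.
Proof.
move=> le_cF; rewrite -sum_nat_const_nat big_nat_cond [X in _ <= X]big_nat_cond.
by apply: leq_sum => i /andP[/le_cF].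
Qed.

Lemma excess_le_chord (x t lo hi : nat) : lo <= x <= hi -> lo <= t <= hi ->
  (hi - lo) * (x - t) <= (hi - t) * (x - lo).
Proof. move=> /andP[lo_x x_hi] /andP[lo_t t_hi]; nia. Qed.

Lemma sum_excess_le_chord (I : Type) (r : seq I) (P : pred I) (F : I -> nat) t lo hi :
  (forall i, P i -> lo <= F i <= hi) -> lo <= t <= hi ->
  (hi - lo) * \sum_(i <- r | P i) (F i - t) <= (hi - t) * \sum_(i <- r | P i) (F i - lo).
Proof.
move=> F_bounds t_bounds; rewrite !big_distrr; apply: leq_sum => i Pi.
exact: excess_le_chord (F_bounds i Pi) t_bounds.
Qed.

Section ExcessCondition.

Variables (n m M R k : nat) (a b : 'I_n -> nat).
Hypotheses (m_gt0 : 0 < m) (le_Rn : R <= n) (le_Mn : M <= n).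
Hypotheses (a_bounds : forall i, m <= a i <= n) (b_bounds : forall j, m <= b j <= n).
Hypothesis a_le_M : forall i : 'I_n, R <= i -> a i <= M.
Hypothesis b_le_M : forall j : 'I_n, R <= j -> b j <= M.

Let f := zero_ext a.
Let S := \sum_(i < n) a i.
Let N := \sum_(i < n | i < R) a i.
Let B := \sum_(j < n | j < R) b j.

Hypothesis sum_ab : S = \sum_j b j.
Hypotheses (le_BN : B <= N) (lt_N : N < n * m) (N_slack : N + m * R + m <= m * n).
Hypothesis k_disc :
  m * m + S + R * m < 2 * n * m \/ m <= k /\ 2 * k * m + S + R * m <= k * k + 2 * n * m.
Hypothesis k_floor : k * M + n * m + N <= S + R * m + k * m.
Hypothesis k_slack : k <= M \/ m * k + N + m * R <= m * n.

Lemma f_bounds i : i < n -> m <= f i <= n.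
Proof. by move=> lt_in; rewrite /f (zero_ext_ord a lt_in). Qed.

Lemma sum_f_cat t : t <= n -> S = \sum_(0 <= i < t) f i + \sum_(t <= i < n) f i.
Proof.
move=> le_tn; rewrite -big_cat_nat // big_mkord; apply: eq_bigr => i _.
by rewrite /f zero_extE.
Qed.

Lemma N_sum_f : N = \sum_(0 <= i < R) f i.
Proof.
rewrite big_mkord (big_ord_widen n f le_Rn); apply: eq_bigr => i _.
by rewrite /f zero_extE.
Qed.

Lemma tail_ge t : (n - t) * m <= \sum_(t <= i < n) f i.
Proof. by apply: sum_nat_range_ge => i /andP[_ lt_in]; case/andP: (f_bounds lt_in). Qed.

Lemma sum_split_R (F : 'I_n -> nat) :
  \sum_j F j = \sum_(j < n | j < R) F j + \sum_(j < n | R <= j) F j.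
Proof.
rewrite (bigID (fun j : 'I_n => j < R)); congr (_ + _).
by apply: eq_bigl => j; rewrite -leqNgt.
Qed.

Lemma sum_excess_m : \sum_(j < n | R <= j) (b j - m) + B + n * m = S + R * m.
Proof.
have sum_m := sum_split_R (fun _ => m).
rewrite sum_nat_const card_ord -(big_ord_widen n (fun _ => m) le_Rn) in sum_m.
rewrite sum_nat_const card_ord in sum_m.
have : \sum_(j < n | R <= j) b j = \sum_(j < n | R <= j) (b j - m) + \sum_(j < n | R <= j) m.
  by rewrite -big_split; apply: eq_bigr => j _ /=; rewrite subnK //; case/andP: (b_bounds j).
by rewrite sum_ab (sum_split_R b); lia.
Qed.

Lemma excess_le_tail_low t : t <= n -> t <= m ->
  \sum_j (b j - t) <= \sum_(t <= i < n) f i.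
Proof.
move=> le_tn le_tm.
have excess_eq : \sum_j (b j - t) + n * t = S.
  rewrite sum_ab -[n in n * t]card_ord -sum_nat_const -big_split; apply: eq_bigr => j _ /=.
  by rewrite subnK // (leq_trans le_tm); case/andP: (b_bounds j).
have head_le : \sum_(0 <= i < t) f i <= (t - 0) * n.
  apply: sum_nat_range_le => i /andP[_ lt_it].
  by case/andP: (f_bounds (leq_trans lt_it le_tn)).
have := sum_f_cat le_tn; rewrite subn0 in head_le; lia.
Qed.

Lemma excess_le_tail_head t : m <= t -> t <= R ->
  \sum_j (b j - t) <= \sum_(t <= i < n) f i.
Proof.
move=> le_mt le_tR; have le_tn := leq_trans le_tR le_Rn.
rewrite (sum_split_R (fun j => b j - t)).
have D1_le : \sum_(j < n | j < R) (b j - t) <= B by apply: leq_sum => j _; exact: leq_subr.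
have D2_le : \sum_(j < n | R <= j) (b j - t) <= \sum_(j < n | R <= j) (b j - m).
  by apply: leq_sum => j _; exact: leq_sub2l.
have mid_ge : (R - t) * m <= \sum_(t <= i < R) f i.
  by apply: sum_nat_range_ge => i /andP[_ lt_iR]; case/andP: (f_bounds (leq_trans lt_iR le_Rn)).
have tail_eq : \sum_(t <= i < n) f i = \sum_(t <= i < R) f i + \sum_(R <= i < n) f i.
  by rewrite -big_cat_nat.
have Rm_eq : (R - t) * m + t * m = R * m by rewrite -mulnDl subnK.
have : m * t <= m * R by rewrite leq_mul2l le_tR orbT.
have := sum_f_cat le_Rn; have := sum_excess_m; rewrite -N_sum_f; lia.
Qed.

Lemma n_gt0 : 0 < n.
Proof. by have := leq_ltn_trans (leq0n N) lt_N; rewrite muln_gt0 => /andP[]. Qed.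

Lemma head_excess_le t : t <= n -> n * \sum_(j < n | j < R) (b j - t) <= (n - t) * B.
Proof.
move=> le_tn; rewrite -[n in n * _]subn0.
have -> : B = \sum_(j < n | j < R) (b j - 0) by apply: eq_bigr => j _; rewrite subn0.
by apply: sum_excess_le_chord => // j _; case/andP: (b_bounds j).
Qed.

Lemma excess_le_tail_top t : M <= t -> t <= n ->
  \sum_j (b j - t) <= \sum_(t <= i < n) f i.
Proof.
move=> le_Mt le_tn.
rewrite (sum_split_R (fun j => b j - t)) [X in _ + X]big1 ?addn0; last first.
  by move=> j le_Rj; apply/eqP; rewrite subn_eq0 (leq_trans (b_le_M le_Rj)).
apply: leq_trans (tail_ge t); rewrite -(leq_pmul2l n_gt0).
apply: leq_trans (head_excess_le le_tn) _.
by rewrite mulnCA leq_mul2l (leq_trans le_BN (ltnW lt_N)) orbT.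
Qed.

Lemma excess_le_tail_mid t : R < t -> m < t -> t < M ->
  \sum_j (b j - t) <= \sum_(t <= i < n) f i.
Proof.
move=> lt_Rt lt_mt lt_tM; have le_tn := leq_trans (ltnW lt_tM) le_Mn.
rewrite (sum_split_R (fun j => b j - t)).
set D1 := \sum_(j < n | j < R) _; set D2 := \sum_(j < n | R <= j) _.
set J := \sum_(j < n | R <= j) (b j - m); set T := \sum_(t <= i < n) f i.
have D1_le := head_excess_le le_tn.
have D2_le : (M - m) * D2 <= (M - t) * J.
  apply: sum_excess_le_chord => [j le_Rj|]; last by rewrite (ltnW lt_mt) (ltnW lt_tM).
  by case/andP: (b_bounds j) => -> _; rewrite b_le_M.
have T_ge : (n - t) * m <= T := tail_ge t.
have mid_le : \sum_(R <= i < t) f i <= (t - R) * M.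
  apply: sum_nat_range_le => i /andP[le_Ri lt_it]; have lt_in := leq_trans lt_it le_tn.
  by rewrite /f (zero_ext_ord a lt_in) a_le_M.
have S_eq : S = N + \sum_(R <= i < t) f i + T.
  rewrite (sum_f_cat le_Rn) N_sum_f -addnA; congr (_ + _).
  by rewrite /T -big_cat_nat // ltnW.
rewrite !mulnBl in D1_le D2_le T_ge mid_le.
have : t * B <= n * B by rewrite leq_mul2r le_tn orbT.
have : m * D2 <= M * D2 by rewrite leq_mul2r (ltnW (ltn_trans lt_mt lt_tM)) orbT.
have : t * J <= M * J by rewrite leq_mul2r (ltnW lt_tM) orbT.
have : t * m <= n * m by rewrite leq_mul2r le_tn orbT.
have : R * M <= t * M by rewrite leq_mul2r (ltnW lt_Rt) orbT.
have := sum_excess_m; rewrite -/J.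
have := @excess_le_tail_midZ (Z.of_nat n) (Z.of_nat m) (Z.of_nat M) (Z.of_nat R) (Z.of_nat N)
  (Z.of_nat B) (Z.of_nat S) (Z.of_nat k) (Z.of_nat t) (Z.of_nat D1) (Z.of_nat D2)
  (Z.of_nat J) (Z.of_nat T).
lia.
Qed.

Lemma excess_condition : gale_ryser_cond f n b.
Proof.
move=> t le_tn.
have [le_tm | lt_mt] := leqP t m; first exact: excess_le_tail_low.
have [le_tR | lt_Rt] := leqP t R; first exact: excess_le_tail_head (ltnW lt_mt) le_tR.
have [lt_tM | le_Mt] := ltnP t M; first exact: excess_le_tail_mid.
exact: excess_le_tail_top.
Qed.

End ExcessCondition.

Lemma dmin_le n (a b : 'I_n -> nat) i : dmin a b <= minn (a i) (b i).
Proof.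
rewrite /dmin; elim: (index_enum _) (mem_index_enum i) => // x r IH.
rewrite in_cons big_cons => /orP[/eqP <- | ir]; first exact: geq_minl.
exact: leq_trans (geq_minr _ _) (IH ir).
Qed.

Lemma entries_bounds n (a b : 'I_n -> nat) i :
  dmin a b <= a i <= dmax a b /\ dmin a b <= b i <= dmax a b.
Proof.
have := dmin_le a b i; have : maxn (a i) (b i) <= dmax a b by exact: (leq_bigmax i).
rewrite geq_max leq_min; lia.
Qed.

Section RealBounds.
Local Open Scope R_scope.

Lemma Zceil_shift_sqrt (x d : R) : 0 <= d ->
  x <= IZR (Zceil (x + sqrt d)) /\
  d <= (IZR (Zceil (x + sqrt d)) - x) * (IZR (Zceil (x + sqrt d)) - x).
Proof.
move=> d_ge0; have sqrt_ge0 := sqrt_pos d.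
have [_ ceil_ge] := Zceil_bound (x + sqrt d).
split; first lra.
rewrite -{1}(sqrt_sqrt d d_ge0); apply: Rmult_le_compat; lra.
Qed.

Lemma le_Zfloor_div (M k : nat) (x y : R) : (0 < k)%N ->
  (Z.of_nat M <= Zfloor (x / INR k + y))%Z -> INR k * INR M <= x + INR k * y.
Proof.
move=> k_gt0 /IZR_le; rewrite -INR_IZR_INZ => le_M.
have k_pos : 0 < INR k by apply: lt_0_INR; apply/ltP.
have [floor_le _] := Zfloor_bound (x / INR k + y).
have -> : x + INR k * y = INR k * (x / INR k + y) by field; lra.
by apply: Rmult_le_compat_l; lra.
Qed.

Lemma Zceil_root_spec (m D E : nat) : (0 < m)%N ->
  let d := INR D - INR E in
  exists2 kn, (if Rle_dec 0 d then Zceil (INR m + sqrt d) else 1%Z) = Z.of_nat kn &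
    (0 < kn)%N /\ ((D < E)%N \/ (m <= kn)%N /\ (D + 2 * kn * m <= kn * kn + E + m * m)%N).
Proof.
move=> m_gt0 d; have m_pos : 1 <= INR m by apply: (le_INR 1); apply/leP.
case: Rle_dec => [d_ge0 | d_lt0].
- have [le_mk d_le] := Zceil_shift_sqrt (INR m) d_ge0.
  have k_ge0 : (0 <= Zceil (INR m + sqrt d))%Z by apply: le_IZR; lra.
  exists (Z.to_nat (Zceil (INR m + sqrt d))); first by rewrite Z2Nat.id.
  have kE : INR (Z.to_nat (Zceil (INR m + sqrt d))) = IZR (Zceil (INR m + sqrt d)).
    by rewrite INR_IZR_INZ Z2Nat.id.
  split; first by apply/ltP/INR_lt; rewrite kE /=; lra.
  right; split; apply/leP/INR_le; rewrite ?kE //.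
  by rewrite !plus_INR !mult_INR kE /d in d_le *; rewrite [INR 2]/=; nra.
- exists 1%N => //; split=> //; left; apply/ltP/INR_lt; rewrite /d in d_lt0; lra.
Qed.

Lemma slack_bound (n m r N x : nat) (lam : R) : (0 < m)%N -> INR N = INR n * lam ->
  INR x <= INR n - INR n * lam / INR m - INR r -> (m * x + N + m * r <= m * n)%N.
Proof.
move=> m_gt0 N_eq le_x; have m_pos : 0 < INR m by apply: lt_0_INR; apply/ltP.
apply/leP/INR_le; rewrite !plus_INR !mult_INR N_eq.
have : INR x * INR m <= (INR n - INR n * lam / INR m - INR r) * INR m.
  by apply: Rmult_le_compat_r; lra.
have -> : (INR n - INR n * lam / INR m - INR r) * INR m =
          INR n * INR m - INR n * lam - INR r * INR m.
  by field; lra.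
lra.
Qed.

Lemma rounding_k_spec (n m r M N S : nat) (lam : R) :
  (0 < m)%N -> INR N = INR n * lam ->
  let d := INR (m * m + S + r * m) - INR (2 * n * m) in
  let k := if Rle_dec 0 d then Zceil (INR m + sqrt d) else 1%Z in
  (Z.of_nat M <= Zfloor ((INR S - INR n * INR m - INR N + INR r * INR m) / IZR k + INR m))%Z ->
  (k <= Z.of_nat M)%Z \/ IZR k <= INR n - INR n * lam / INR m - INR r ->
  exists kn : nat,
    [/\ m * m + S + r * m < 2 * n * m \/ m <= kn /\ 2 * kn * m + S + r * m <= kn * kn + 2 * n * m,
        kn * M + n * m + N <= S + r * m + kn * m
      & kn <= M \/ m * kn + N + m * r <= m * n]%N.
Proof.
move=> m_gt0 N_eq d k M_le k_alt.
have [kn k_eq [kn_gt0 k_disc]] := Zceil_root_spec (m * m + S + r * m) (2 * n * m) m_gt0.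
have {}k_eq : k = Z.of_nat kn := k_eq.
exists kn; split; first lia.
- move: M_le; rewrite k_eq -INR_IZR_INZ => /(le_Zfloor_div kn_gt0) le_M.
  by apply/leP/INR_le; rewrite !plus_INR !mult_INR; lra.
- case: k_alt => [le_kM | le_k]; [left; lia | right].
  by apply: (slack_bound m_gt0 N_eq); rewrite INR_IZR_INZ -k_eq.
Qed.

End RealBounds.

Theorem corollary5 (n : nat) (a b : 'I_n -> nat) (Rr : nat) (lam : R) :
  let m : nat := dmin a b in
  let cbar : R := Rdiv (INR (\sum_(i < n) a i)) (INR n) in
  let disc : R := Rplus (Rplus (Rmult (INR m) (INR m))
                         (Rmult (INR n) (Rminus cbar (Rmult 2 (INR m)))))
                        (Rmult (INR Rr) (INR m)) in
  let kstar : R := Rplus (INR m) (sqrt disc) in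
  let k : Z := if Rle_dec 0 disc then Zceil kstar else 1%Z in
  let M : nat := \max_(i < n | (Rr <= i.+1)%N) maxn (a i) (b i) in
  let slack : R := Rminus (Rminus (INR n) (Rdiv (Rmult (INR n) lam) (INR m))) (INR Rr) in
  \sum_(i < n) a i = \sum_(i < n) b i ->
  (forall i j : 'I_n, (i <= j)%N -> (a j <= a i)%N) ->
  (1 <= m <= n)%N ->
  (dmax a b <= n)%N ->
  (Rr <= n)%N ->
  Rle 0 lam ->
  INR (\sum_(i < n | (i < Rr)%N) a i) = Rmult (INR n) lam ->
  Rle (INR (\sum_(i < n | (i < Rr)%N) b i)) (Rmult (INR n) lam) ->
  Rlt lam (INR m) ->
  Rge slack 1 ->
  Z.le (Z.of_nat M)
    (Z.min (Zfloor (Rplus (Rdiv (Rplus (Rminus (Rminus (Rmult (INR n) cbar)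
                                                    (Rmult (INR n) (INR m)))
                                            (Rmult (INR n) lam))
                                     (Rmult (INR Rr) (INR m)))
                               (IZR k))
                         (INR m)))
           (Z.of_nat n)) ->
  Z.le k (Z.of_nat M) \/ Rle (IZR k) slack ->
  graphic_with_loops a b.
Proof.
move=> m cbar disc kstar k M slack sum_ab a_noninc /andP[m_gt0 le_mn] le_dmax le_Rn _.
move=> N_eq B_le lt_lam slack_ge1 /(Z.le_trans _ _ _)/(_ (Z.le_min_l _ _)) M_le k_alt.
set S := \sum_(i < n) a i in sum_ab *.
set N := \sum_(i < n | i < Rr) a i in N_eq *.
have n_pos : Rlt 0 (INR n) by apply: lt_0_INR; apply/ltP; exact: leq_trans le_mn.
have S_eq : Rmult (INR n) cbar = INR S by rewrite /cbar -/S; field; lra.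
have disc_eq : disc = Rminus (INR (m * m + S + Rr * m)) (INR (2 * n * m)).
  by rewrite /disc !plus_INR !mult_INR -S_eq [INR 2]/=; ring.
rewrite /k /kstar disc_eq S_eq -N_eq in M_le k_alt.
have [kn [k_disc k_floor k_slack]] := rounding_k_spec m_gt0 N_eq M_le k_alt.
have ab_le_M (i : 'I_n) : (Rr <= i)%N -> (maxn (a i) (b i) <= M)%N.
  by move=> le_Ri; apply: leq_bigmax_cond; exact: leqW.
have ab_bounds (i : 'I_n) : (m <= a i <= n)%N /\ (m <= b i <= n)%N.
  by have := entries_bounds a b i; rewrite -/m; lia.
apply: graphic_with_loops_of_gale_ryser => //.
apply: (@excess_condition n m M Rr kn) => //.
- by apply/bigmax_leqP => i _; apply: leq_trans le_dmax; exact: leq_bigmax.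
- by move=> i; case: (ab_bounds i).
- by move=> j; case: (ab_bounds j).
- by move=> i /ab_le_M; rewrite geq_max => /andP[].
- by move=> j /ab_le_M; rewrite geq_max => /andP[].
- by apply/leP/INR_le; rewrite N_eq.
- by apply/ltP/INR_lt; rewrite mult_INR N_eq; apply: Rmult_lt_compat_l.
- by have := slack_bound (x := 1) m_gt0 N_eq (Rge_le _ _ slack_ge1); lia.
Qed.
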